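(* Let $u$ be a half-activated vertex of a graph $G$. Then there exists a half-activated vertex of $G$ adjacent to $u$.
   Context: For a finite simple graph $G$ with vertex set $\{v_1,\dots,v_n\}$, the closed adjacency matrix $N(G)$ is the $n\times n$ matrix over $\mathbb{Z}_2$ whose $(i,j)$ entry is $1$ iff $i=j$ or $v_i$ is adjacent to $v_j$. Elements of $\operatorname{Ker}(N(G))$ are null patterns. A vertex $v$ is half-activated if $\boldsymbol{\ell}(v)=1$ for some null pattern $\boldsymbol{\ell}$. *)

From mathcomp Require Import all_boot all_order all_algebra.
Set Implicit Arguments. Unset Strict Implicit. Unset Printing Implicit Defensive.
Import GRing.Theory.
Local Open Scope ring_scope.

Definition simple_graph (n : nat) (adj : rel 'I_n) : Prop :=
  symmetric adj /\ irreflexive adj.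

Definition closed_adj (n : nat) (adj : rel 'I_n) : 'M['F_2]_n :=
  \matrix_(i, j) (if (i == j) || adj i j then 1 else 0).

Definition null_pattern (n : nat) (adj : rel 'I_n) (l : 'cV['F_2]_n) : Prop :=
  closed_adj adj *m l = 0.

Definition half_activated (n : nat) (adj : rel 'I_n) (v : 'I_n) : Prop :=
  exists l : 'cV['F_2]_n, null_pattern adj l /\ l v 0 = 1.

From mathcomp Require Import all_boot all_order all_algebra.
Set Implicit Arguments.
Unset Strict Implicit.
Unset Printing Implicit Defensive.
Import GRing.Theory.
Local Open Scope ring_scope.

(* Row u of N(G) l = 0 says that, over Z_2, l(u) is the sum of l over the
   neighbours of u; if l(u) = 1 this sum is nonzero, so some neighbour v has
   l(v) = 1, and the same null pattern l half-activates v. *)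

Lemma Fp2_neq0 (x : 'F_2) : x != 0 -> x = 1.
Proof. by case: x => [[|[|m]] lt_x2] //= _; apply/val_inj. Qed.

Lemma Fp2_addr_eq0 (x y : 'F_2) : x + y = 0 -> x = y.
Proof. by move/addr0_eq; rewrite oppr_pchar2 // pchar_Fp. Qed.

Lemma sumr_neq0_exists (I : finType) (V : nmodType) (P : pred I) (F : I -> V) :
  \sum_(i | P i) F i != 0 -> exists2 i, P i & F i != 0.
Proof.
case: (pickP [pred i | P i && (F i != 0)]) => [i /andP[Pi Fi_nz] _ | no_nz].
  by exists i.
rewrite big1 ?eqxx // => i Pi.
by apply/eqP; have := no_nz i; rewrite /= Pi => /negbFE.
Qed.

Section ClosedAdjacency.

Variables (n : nat) (adj : rel 'I_n).
Hypothesis adj_irr : irreflexive adj.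

Lemma closed_adj_mulmxE (l : 'cV['F_2]_n) (u : 'I_n) :
  (closed_adj adj *m l) u 0 = l u 0 + \sum_(v | adj u v) l v 0.
Proof.
rewrite mxE (bigD1 u) //= mxE eqxx mul1r; congr (_ + _).
rewrite [LHS]big_mkcond [RHS]big_mkcond; apply: eq_bigr => v _.
case: (eqVneq v u) => [-> | ne_vu]; first by rewrite adj_irr.
by rewrite mxE eq_sym (negbTE ne_vu) /=; case: (adj u v); rewrite ?mul1r ?mul0r.
Qed.

Lemma null_pattern_neighbour_sum (l : 'cV['F_2]_n) (u : 'I_n) :
  null_pattern adj l -> l u 0 = \sum_(v | adj u v) l v 0.
Proof.
move=> null_l; apply: Fp2_addr_eq0.
by rewrite -closed_adj_mulmxE null_l mxE.
Qed.

End ClosedAdjacency.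

Theorem lemma4p1 (n : nat) (adj : rel 'I_n) (u : 'I_n) :
  simple_graph adj -> half_activated adj u ->
  exists v : 'I_n, adj u v /\ half_activated adj v.
Proof.
move=> [_ adj_irr] [l [null_l lu1]].
have : \sum_(v | adj u v) l v 0 != 0.
  by rewrite -(null_pattern_neighbour_sum adj_irr u null_l) lu1 oner_neq0.
case/sumr_neq0_exists => v adj_uv /Fp2_neq0 lv1.
by exists v; split; last exists l.
Qed.
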